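(* Let $\varphi:[r_+,\infty)\to\mathbb{C}$ be a $C^1$ function. Then for any $r'>r_+$, $$\int_{r_+}^{r'}|\varphi|^2\,dr\leq C\Big(\int_{r_+}^{r'}\mu^2r^2|\partial_r\varphi|^2\,dr+(r'-r_+)|\varphi(r')|^2\Big),$$ and if moreover $\lim_{r\to\infty}r|\varphi(r)|^2=0$, then $$\int_{r_+}^{\infty}|\varphi|^2\,dr\leq C\int_{r_+}^{\infty}\mu^2r^2|\partial_r\varphi|^2\,dr,$$ where $C$ is a constant depending only on $M$ and $a$.
   Context: $M>0$, $|a|<M$, $\Delta=r^2-2Mr+a^2$, $r_+=M+\sqrt{M^2-a^2}$, $\mu=\Delta/(r^2+a^2)$. *)

From Stdlib Require Import Reals.
From Coquelicot Require Import Coquelicot.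
Open Scope R_scope.

Definition Delta (M a r : R) : R := r ^ 2 - 2 * M * r + a ^ 2.
Definition rplus (M a : R) : R := M + sqrt (M ^ 2 - a ^ 2).
Definition mu (M a r : R) : R := Delta M a r / (r ^ 2 + a ^ 2).

Definition is_derive_on_half (x0 : R) (phi dphi : R -> C) : Prop :=
  (forall x, x0 < x -> is_derive phi x (dphi x)) /\
  filterlim (fun h => scal (/ h) (minus (phi (x0 + h)) (phi x0)))
            (at_right 0) (locally (dphi x0)).

Definition C1_on_half (x0 : R) (phi dphi : R -> C) : Prop :=
  is_derive_on_half x0 phi dphi /\
  (forall x, x0 < x -> continuous dphi x) /\
  filterlim dphi (at_right x0) (locally (dphi x0)).

From Pilot Require Import Defs.
From Stdlib Require Import Reals Lra Psatz Lia.
From Coquelicot Require Import Coquelicot.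
Open Scope R_scope.

(* Since [Delta = (r - r_+) (r - r_-)], one has [(r - r_+)^2 <= c mu^2 r^2] on
   [r >= r_+] with [c = (r_+ / sqrt (M^2 - a^2))^2].  The estimate is then a
   one-dimensional Hardy inequality: for each real component [u] of [phi],
   expanding [(u + 2 (r - r_+) u')^2 >= 0] gives
   [u^2 <= 2 d/dr ((r - r_+) u^2) + 4 (r - r_+)^2 u'^2], and integrating over
   [[r_+, r']] yields the first bound with [C = 2 + 4 c].  The second follows
   as [r' -> oo]: the boundary term tends to 0 and the right-hand integral is
   nondecreasing in [r']. *)

Lemma continuous_Rplus (f g : R -> R) (x : R) :
  continuous f x -> continuous g x -> continuous (fun t => f t + g t) x.
Proof. exact (continuous_plus f g x). Qed.

Lemma continuous_Rminus (f g : R -> R) (x : R) :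
  continuous f x -> continuous g x -> continuous (fun t => f t - g t) x.
Proof. exact (continuous_minus f g x). Qed.

Lemma continuous_Rmult (f g : R -> R) (x : R) :
  continuous f x -> continuous g x -> continuous (fun t => f t * g t) x.
Proof. exact (continuous_mult f g x). Qed.

Lemma continuous_Rpow (f : R -> R) (n : nat) (x : R) :
  continuous f x -> continuous (fun t => f t ^ n) x.
Proof.
  intros hf. induction n as [|n IH]; simpl.
  - apply continuous_const.
  - now apply continuous_Rmult.
Qed.

Ltac solve_continuous :=
  repeat match goal with
  | |- continuous (fun _ => ?c) _ => apply continuous_const
  | |- continuous (fun t => t) _ => apply continuous_id
  | |- continuous (fun t => _ + _) _ => apply continuous_Rplus
  | |- continuous (fun t => _ - _) _ => apply continuous_Rminus
  | |- continuous (fun t => _ * _) _ => apply continuous_Rmult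
  | |- continuous (fun t => _ ^ _) _ => apply continuous_Rpow
  end.

Lemma hardy_interval (p b : R) (u du : R -> R) :
  p <= b ->
  (forall t, p <= t <= b -> is_derive u t (du t)) ->
  (forall t, p <= t <= b -> continuous du t) ->
  RInt (fun t => u t ^ 2) p b
  <= 2 * ((b - p) * u b ^ 2) + 4 * RInt (fun t => (t - p) ^ 2 * du t ^ 2) p b.
Proof.
  intros hpb hu hdu.
  assert (hcu : forall t, p <= t <= b -> continuous u t).
  { intros t ht. apply (ex_derive_continuous u). exists (du t). auto. }
  set (F := fun t => u t ^ 2 + 2 * (t - p) * (u t * du t)).
  set (G := fun t => (t - p) ^ 2 * du t ^ 2).
  assert (hF : is_RInt F p b ((b - p) * u b ^ 2)).
  { replace ((b - p) * u b ^ 2)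
      with (minus ((b - p) * u b ^ 2) ((p - p) * u p ^ 2))
      by (unfold minus, plus, opp; simpl; ring).
    apply (is_RInt_derive (fun t => (t - p) * u t ^ 2) F);
      rewrite Rmin_left, Rmax_right by lra; intros t ht.
    - unfold F. auto_derive.
      + exists (du t). auto.
      + replace (Derive (fun x => u x) t) with (du t)
          by (symmetry; now apply is_derive_unique, hu).
        ring.
    - unfold F. solve_continuous; auto. }
  assert (hG : ex_RInt G p b).
  { apply (@ex_RInt_continuous R_CompleteNormedModule). rewrite Rmin_left, Rmax_right by lra.
    intros t ht. unfold G. solve_continuous; auto. }
  assert (hu2 : ex_RInt (fun t => u t ^ 2) p b).
  { apply (@ex_RInt_continuous R_CompleteNormedModule). rewrite Rmin_left, Rmax_right by lra.
    intros t ht. solve_continuous; auto. }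
  assert (hsum : is_RInt (fun t => 2 * F t + 4 * G t) p b
                   (2 * ((b - p) * u b ^ 2) + 4 * RInt G p b)).
  { apply (is_RInt_plus (fun t => 2 * F t) (fun t => 4 * G t)).
    - exact (is_RInt_scal F p b 2 _ hF).
    - exact (is_RInt_scal G p b 4 _ (@RInt_correct R_CompleteNormedModule G p b hG)). }
  apply (is_RInt_le _ _ p b _ _ hpb (@RInt_correct R_CompleteNormedModule _ p b hu2) hsum).
  intros t _. unfold F, G.
  assert (0 <= (u t + 2 * (t - p) * du t) ^ 2) by apply pow2_ge_0.
  replace (2 * (u t ^ 2 + 2 * (t - p) * (u t * du t)) + 4 * ((t - p) ^ 2 * du t ^ 2))
    with (u t ^ 2 + (u t + 2 * (t - p) * du t) ^ 2) by ring.
  lra.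
Qed.

Definition C1_on_half_real (p : R) (u du : R -> R) : Prop :=
  (forall x, p < x -> is_derive u x (du x)) /\
  filterlim (fun h => / h * (u (p + h) - u p)) (at_right 0) (locally (du p)) /\
  (forall x, p < x -> continuous du x) /\
  filterlim du (at_right p) (locally (du p)).

Lemma C1_on_half_comp_linear (p : R) (L : R * R -> R) (phi dphi : R -> C) :
  is_linear L -> C1_on_half p phi dphi ->
  C1_on_half_real p (fun t => L (phi t)) (fun t => L (dphi t)).
Proof.
  intros hL [[hd hr] [hc hcr]].
  assert (hLc : forall z, filterlim L (locally z) (locally (L z)))
    by (intros z; exact (linear_cont L z hL)).
  split; [|split; [|split]].
  - intros x hx. unfold is_derive.
    eapply filterdiff_ext_lin.
    + exact (filterdiff_comp' phi L x _ _ (hd x hx) (filterdiff_linear L hL)).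
    + intros h. simpl. now rewrite (linear_scal L hL).
  - eapply filterlim_ext; [|exact (filterlim_comp _ _ _ _ L _ _ _ hr (hLc _))].
    intros h. simpl. rewrite (linear_scal L hL).
    exact (f_equal (Rmult (/ h)) (linear_minus L (phi (p + h)) (phi p) hL)).
  - intros x hx. exact (filterlim_comp _ _ _ dphi L _ _ _ (hc x hx) (hLc _)).
  - exact (filterlim_comp _ _ _ dphi L _ _ _ hcr (hLc _)).
Qed.

(* Continuation by the tangent line at [p]: it makes the one-sided derivative
   at [p] two-sided, as the FTC [is_RInt_derive] requires at the endpoints. *)
Definition extend_left (p : R) (f df : R -> R) (t : R) : R :=
  if Rle_dec p t then f t else f p + (t - p) * df p.

Lemma extend_left_eq (p : R) (f df : R -> R) (t : R) :
  p <= t -> extend_left p f df t = f t.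
Proof. intros ht. unfold extend_left. now destruct (Rle_dec p t). Qed.

Lemma extend_left_locally_lt (p : R) (f df : R -> R) (x : R) : x < p ->
  locally x (fun t => f p + (t - p) * df p = extend_left p f df t).
Proof.
  intros hx. exists (mkposreal (p - x) ltac:(lra)). intros t ht.
  assert (htx : Rabs (t - x) < p - x) by exact ht. apply Rabs_def2 in htx.
  unfold extend_left. destruct (Rle_dec p t); [lra | reflexivity].
Qed.

Lemma extend_left_locally_gt (p : R) (f df : R -> R) (x : R) : p < x ->
  locally x (fun t => f t = extend_left p f df t).
Proof.
  intros hx. exists (mkposreal (x - p) ltac:(lra)). intros t ht.
  assert (htx : Rabs (t - x) < x - p) by exact ht. apply Rabs_def2 in htx.
  symmetry. apply extend_left_eq. lra.
Qed.

Lemma continuous_extend_left_flat (p : R) (f : R -> R) :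
  (forall x, p < x -> continuous f x) ->
  filterlim f (at_right p) (locally (f p)) ->
  forall x, continuous (extend_left p f (fun _ => 0)) x.
Proof.
  intros hc hr x. destruct (Rtotal_order x p) as [hx | [-> | hx]].
  - eapply continuous_ext_loc; [apply extend_left_locally_lt, hx |].
    solve_continuous.
  - unfold continuous. rewrite (extend_left_eq p f _ p (Rle_refl p)).
    apply (filterlim_locally (F := locally p)). intros eps.
    destruct (proj1 (filterlim_locally _ _) hr eps) as [d hd].
    exists d. intros y hy. unfold extend_left.
    destruct (Rle_dec p y) as [hpy | hpy].
    + destruct (Rle_lt_or_eq_dec _ _ hpy) as [hlt | <-]; [now apply hd | apply ball_center].
    + rewrite Rmult_0_r, Rplus_0_r. apply ball_center.
  - eapply continuous_ext_loc; [apply extend_left_locally_gt, hx |].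
    now apply hc.
Qed.

Lemma is_derive_extend_left (p : R) (u du : R -> R) :
  (forall x, p < x -> is_derive u x (du x)) ->
  filterlim (fun h => / h * (u (p + h) - u p)) (at_right 0) (locally (du p)) ->
  forall x, is_derive (extend_left p u du) x (extend_left p du (fun _ => 0) x).
Proof.
  intros hd hr x. destruct (Rtotal_order x p) as [hx | [-> | hx]].
  - replace (extend_left p du (fun _ => 0) x) with (du p)
      by (unfold extend_left; destruct (Rle_dec p x); [lra | ring]).
    eapply is_derive_ext_loc; [apply extend_left_locally_lt, hx |].
    auto_derive; [exact I | ring].
  - rewrite extend_left_eq by lra.
    apply is_derive_Reals. intros eps heps.
    destruct (proj1 (filterlim_locally _ _) hr (mkposreal eps heps)) as [d hclose].
    exists d. intros h hh0 hhd. unfold extend_left.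
    destruct (Rle_dec p p) as [_ | ?]; [| lra].
    destruct (Rle_dec p (p + h)) as [hph | hph].
    + assert (hball : ball 0 d h).
      { change (Rabs (h - 0) < d). now rewrite Rminus_0_r. }
      specialize (hclose h hball ltac:(lra)).
      change (Rabs (/ h * (u (p + h) - u p) - du p) < eps) in hclose.
      unfold Rdiv. now rewrite Rmult_comm.
    + replace ((u p + (p + h - p) * du p - u p) / h - du p) with 0 by (field; lra).
      now rewrite Rabs_R0.
  - rewrite extend_left_eq by lra.
    eapply is_derive_ext_loc; [apply extend_left_locally_gt, hx |].
    now apply hd.
Qed.

Lemma C1_on_half_components (p : R) (phi dphi : R -> C) :
  C1_on_half p phi dphi ->
  exists X DX Y DY : R -> R,
    (forall t, is_derive X t (DX t)) /\ (forall t, is_derive Y t (DY t)) /\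
    (forall t, continuous DX t) /\ (forall t, continuous DY t) /\
    (forall t, p <= t -> Cmod (phi t) ^ 2 = X t ^ 2 + Y t ^ 2 /\
                         Cmod (dphi t) ^ 2 = DX t ^ 2 + DY t ^ 2).
Proof.
  intros hphi.
  destruct (C1_on_half_comp_linear p fst phi dphi is_linear_fst hphi)
    as [hdX [hrX [hcX hcrX]]].
  destruct (C1_on_half_comp_linear p snd phi dphi is_linear_snd hphi)
    as [hdY [hrY [hcY hcrY]]].
  exists (extend_left p (fun t => fst (phi t)) (fun t => fst (dphi t))),
    (extend_left p (fun t => fst (dphi t)) (fun _ => 0)),
    (extend_left p (fun t => snd (phi t)) (fun t => snd (dphi t))),
    (extend_left p (fun t => snd (dphi t)) (fun _ => 0)).
  split; [now apply is_derive_extend_left |].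
  split; [now apply is_derive_extend_left |].
  split; [now apply continuous_extend_left_flat |].
  split; [now apply continuous_extend_left_flat |].
  intros t ht. rewrite !extend_left_eq by exact ht.
  now rewrite !Cmod2_alt.
Qed.

Lemma ex_RInt_weighted_sqr_derivative (p : R) (w : R -> R) (phi dphi : R -> C) :
  C1_on_half p phi dphi ->
  (forall t, p <= t -> continuous w t) ->
  forall a b, p <= a -> p <= b -> ex_RInt (fun r => w r * Cmod (dphi r) ^ 2) a b.
Proof.
  intros hphi hw a b ha hb.
  destruct (C1_on_half_components p phi dphi hphi)
    as (X & DX & Y & DY & _ & _ & hDX & hDY & heq).
  assert (hp : p <= Rmin a b) by now apply Rmin_glb.
  apply (ex_RInt_ext (fun r => w r * (DX r ^ 2 + DY r ^ 2))).
  - intros r hr. now rewrite (proj2 (heq r ltac:(lra))).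
  - apply (@ex_RInt_continuous R_CompleteNormedModule). intros r hr.
    solve_continuous; auto. apply hw. lra.
Qed.

Lemma hardy_C1_on_half (p c : R) (w : R -> R) (phi dphi : R -> C) :
  C1_on_half p phi dphi ->
  (forall t, p <= t -> continuous w t) ->
  (forall t, p <= t -> (t - p) ^ 2 <= c * w t) ->
  forall b, p <= b ->
  RInt (fun r => Cmod (phi r) ^ 2) p b
  <= 2 * ((b - p) * Cmod (phi b) ^ 2)
     + 4 * (c * RInt (fun r => w r * Cmod (dphi r) ^ 2) p b).
Proof.
  intros hphi hw hwc b hb.
  pose proof (ex_RInt_weighted_sqr_derivative p w phi dphi hphi hw p b
                (Rle_refl p) hb) as hexw.
  destruct (C1_on_half_components p phi dphi hphi)
    as (X & DX & Y & DY & hX & hY & hDX & hDY & heq).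
  assert (hcX : forall t, continuous X t)
    by (intros t; apply (ex_derive_continuous X); now exists (DX t)).
  assert (hcY : forall t, continuous Y t)
    by (intros t; apply (ex_derive_continuous Y); now exists (DY t)).
  assert (hex : forall f : R -> R, (forall t, continuous f t) -> ex_RInt f p b)
    by (intros f hf; now apply (@ex_RInt_continuous R_CompleteNormedModule)).
  pose proof (hardy_interval p b X DX hb (fun t _ => hX t) (fun t _ => hDX t)) as hardyX.
  pose proof (hardy_interval p b Y DY hb (fun t _ => hY t) (fun t _ => hDY t)) as hardyY.
  assert (hweight :
    RInt (fun t => (t - p) ^ 2 * DX t ^ 2) p b + RInt (fun t => (t - p) ^ 2 * DY t ^ 2) p b
    <= c * RInt (fun r => w r * Cmod (dphi r) ^ 2) p b).
  { assert (hexX : ex_RInt (fun t => (t - p) ^ 2 * DX t ^ 2) p b)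
      by (apply hex; intros t; solve_continuous; auto).
    assert (hexY : ex_RInt (fun t => (t - p) ^ 2 * DY t ^ 2) p b)
      by (apply hex; intros t; solve_continuous; auto).
    replace (c * RInt (fun r => w r * Cmod (dphi r) ^ 2) p b)
      with (RInt (fun r => c * (w r * Cmod (dphi r) ^ 2)) p b)
      by exact (RInt_scal _ p b c hexw).
    replace (RInt (fun t => (t - p) ^ 2 * DX t ^ 2) p b
             + RInt (fun t => (t - p) ^ 2 * DY t ^ 2) p b)
      with (RInt (fun t => (t - p) ^ 2 * DX t ^ 2 + (t - p) ^ 2 * DY t ^ 2) p b)
      by exact (RInt_plus _ _ p b hexX hexY).
    apply RInt_le; [exact hb | now apply (ex_RInt_plus (V := R_NormedModule)) | |].
    - apply (ex_RInt_scal (V := R_NormedModule)), hexw.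
    - intros t ht. rewrite (proj2 (heq t ltac:(lra))).
      assert (0 <= DX t ^ 2 + DY t ^ 2) by nra.
      specialize (hwc t ltac:(lra)). nra. }
  rewrite (RInt_ext _ (fun r => X r ^ 2 + Y r ^ 2)).
  2: { intros r hr. rewrite Rmin_left, Rmax_right in hr by exact hb.
       apply heq. lra. }
  rewrite (RInt_plus (fun r => X r ^ 2) (fun r => Y r ^ 2))
    by (apply hex; intros t; solve_continuous; auto).
  rewrite (proj1 (heq b hb)).
  change (plus (RInt (fun r => X r ^ 2) p b) (RInt (fun r => Y r ^ 2) p b))
    with (RInt (fun r => X r ^ 2) p b + RInt (fun r => Y r ^ 2) p b).
  lra.
Qed.

Section KerrExterior.

Variables M a : R.
Hypothesis hM : 0 < M.
Hypothesis ha : Rabs a < M.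

Lemma sqr_a_lt_sqr_M : a ^ 2 < M ^ 2.
Proof. rewrite <- pow2_abs. pose proof (Rabs_pos a). nra. Qed.

Lemma sqrt_discr_pos : 0 < sqrt (M ^ 2 - a ^ 2).
Proof. apply sqrt_lt_R0. pose proof sqr_a_lt_sqr_M. lra. Qed.

Lemma rplus_pos : 0 < rplus M a.
Proof. unfold rplus. pose proof sqrt_discr_pos. lra. Qed.

Lemma horizon_distance_le_mu (r : R) : rplus M a <= r ->
  sqrt (M ^ 2 - a ^ 2) * (r - rplus M a) <= rplus M a * (mu M a r * r).
Proof.
  intros hr. unfold mu, Defs.Delta, rplus in *.
  pose proof sqrt_discr_pos as hs.
  assert (hs2 : sqrt (M ^ 2 - a ^ 2) * sqrt (M ^ 2 - a ^ 2) = M ^ 2 - a ^ 2)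
    by (apply sqrt_sqrt; pose proof sqr_a_lt_sqr_M; lra).
  set (s := sqrt (M ^ 2 - a ^ 2)) in *.
  assert (hden : 0 < r ^ 2 + a ^ 2) by nra.
  (* [Delta = (r - r_+) (r - r_-)] and [r_+ r_- = a^2] reduce the claim to
     [(r - r_+) (M r^2 - a^2 r - s a^2) >= 0]. *)
  assert (hbracket : 0 <= M * r ^ 2 - a ^ 2 * r - s * a ^ 2).
  { assert (hMr : M * r - a ^ 2 >= s * (M + s)) by nra.
    assert (r * (M * r - a ^ 2) >= (M + s) * (s * (M + s))) by nra.
    nra. }
  apply Rmult_le_reg_r with (r ^ 2 + a ^ 2); [exact hden|].
  replace ((M + s) * ((r ^ 2 - 2 * M * r + a ^ 2) / (r ^ 2 + a ^ 2) * r) * (r ^ 2 + a ^ 2))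
    with ((M + s) * ((r ^ 2 - 2 * M * r + a ^ 2) * r)) by (field; lra).
  assert (hfactor : (M + s) * ((r ^ 2 - 2 * M * r + a ^ 2) * r)
                    - s * (r - (M + s)) * (r ^ 2 + a ^ 2)
                    = (r - (M + s)) * (M * r ^ 2 - a ^ 2 * r - s * a ^ 2)).
  { replace (a ^ 2) with (M ^ 2 - s * s) by lra. ring. }
  assert (0 <= (r - (M + s)) * (M * r ^ 2 - a ^ 2 * r - s * a ^ 2))
    by (apply Rmult_le_pos; lra).
  lra.
Qed.

Lemma sqr_horizon_distance_le (r : R) : rplus M a <= r ->
  (r - rplus M a) ^ 2
  <= (rplus M a / sqrt (M ^ 2 - a ^ 2)) ^ 2 * (mu M a r ^ 2 * r ^ 2).
Proof.
  intros hr. pose proof sqrt_discr_pos as hs.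
  pose proof (horizon_distance_le_mu r hr) as hle.
  replace ((r - rplus M a) ^ 2)
    with ((sqrt (M ^ 2 - a ^ 2) * (r - rplus M a)) ^ 2 / sqrt (M ^ 2 - a ^ 2) ^ 2)
    by (field; lra).
  replace ((rplus M a / sqrt (M ^ 2 - a ^ 2)) ^ 2 * (mu M a r ^ 2 * r ^ 2))
    with ((rplus M a * (mu M a r * r)) ^ 2 / sqrt (M ^ 2 - a ^ 2) ^ 2)
    by (field; lra).
  apply Rmult_le_compat_r.
  - apply Rlt_le, Rinv_0_lt_compat. nra.
  - apply pow_incr. nra.
Qed.

Lemma continuous_mu_weight (r : R) : 0 < r ->
  continuous (fun t => mu M a t ^ 2 * t ^ 2) r.
Proof.
  intros hr. apply (ex_derive_continuous (fun t => mu M a t ^ 2 * t ^ 2)).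
  unfold mu, Defs.Delta. auto_derive. nra.
Qed.

End KerrExterior.

Lemma RInt_upper_nondecreasing (p : R) (f : R -> R) :
  (forall t, p < t -> 0 <= f t) ->
  (forall a b, p <= a -> p <= b -> ex_RInt f a b) ->
  forall x y, p <= x <= y -> RInt f p x <= RInt f p y.
Proof.
  intros hf hex x y hxy.
  rewrite <- (RInt_Chasles f p x y) by (apply hex; lra).
  assert (0 <= RInt f x y).
  { apply RInt_ge_0; [lra | apply hex; lra | intros t ht; apply hf; lra]. }
  change (RInt f p x <= RInt f p x + RInt f x y). lra.
Qed.

Lemma is_lim_shift_mult (p : R) (g : R -> R) :
  0 <= p -> (forall x, 0 <= g x) ->
  is_lim (fun x => x * g x) p_infty 0 -> is_lim (fun x => (x - p) * g x) p_infty 0.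
Proof.
  intros hp hg hlim.
  apply (is_lim_le_le_loc (fun _ => 0) (fun x => x * g x)); [| apply is_lim_const | exact hlim].
  exists p. intros x hx. specialize (hg x). split; nra.
Qed.

Lemma Lim_le_of_bound (p K : R) (f g b : R -> R) :
  (forall x, p < x -> f x <= K * (g x + b x)) ->
  (forall x y, p <= x <= y -> g x <= g y) ->
  is_lim b p_infty 0 ->
  Rbar_le (Lim f p_infty) (Rbar_mult K (Lim g p_infty)).
Proof.
  intros hf hg hb. unfold Lim. simpl.
  destruct (is_lim_seq_INR (fun x => p < x) (ex_intro _ p (fun x hx => hx))) as [N hN].
  assert (hbseq : is_lim_seq (fun n => b (INR n)) 0)
    by exact (filterlim_comp _ _ _ INR b _ _ _ is_lim_seq_INR hb).
  assert (hgseq : ex_lim_seq (fun n => g (INR n))).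
  { apply (ex_lim_seq_incr_n _ N), ex_lim_seq_incr. intros n.
    apply hg. pose proof (hN (n + N)%nat ltac:(lia)).
    pose proof (le_INR (n + N) (S n + N) ltac:(lia)). lra. }
  apply Rbar_le_trans with (Lim_seq (fun n => K * (g (INR n) + b (INR n)))).
  - apply Lim_seq_le_loc. exists N. intros n hn. now apply hf, hN.
  - rewrite Lim_seq_scal_l, Lim_seq_plus; [| exact hgseq | now exists 0 |].
    + rewrite (is_lim_seq_unique _ 0 hbseq), Rbar_plus_0_r. apply Rbar_le_refl.
    + rewrite (is_lim_seq_unique _ 0 hbseq). now destruct (Lim_seq _).
Qed.

Theorem lemma2p15 (M a : R) (hM : 0 < M) (ha : Rabs a < M) :
  exists K : R,
    forall (phi dphi : R -> C),
      C1_on_half (rplus M a) phi dphi ->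
      (forall r', rplus M a < r' ->
         RInt (fun r => Cmod (phi r) ^ 2) (rplus M a) r'
         <= K * (RInt (fun r => (mu M a r) ^ 2 * r ^ 2 * Cmod (dphi r) ^ 2)
                      (rplus M a) r'
                 + (r' - rplus M a) * Cmod (phi r') ^ 2)) /\
      (is_lim (fun r => r * Cmod (phi r) ^ 2) p_infty 0 ->
         Rbar_le
           (Lim (fun R' => RInt (fun r => Cmod (phi r) ^ 2) (rplus M a) R') p_infty)
           (Rbar_mult (Finite K)
              (Lim (fun R' => RInt (fun r => (mu M a r) ^ 2 * r ^ 2 * Cmod (dphi r) ^ 2)
                                   (rplus M a) R') p_infty))).
Proof.
  set (c := (rplus M a / sqrt (M ^ 2 - a ^ 2)) ^ 2).
  exists (2 + 4 * c). intros phi dphi hphi.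
  pose proof (rplus_pos M a hM ha) as hp.
  set (w := fun r => mu M a r ^ 2 * r ^ 2).
  assert (hw : forall t, rplus M a <= t -> continuous w t)
    by (intros t ht; apply continuous_mu_weight; lra).
  assert (hwc : forall t, rplus M a <= t -> (t - rplus M a) ^ 2 <= c * w t)
    by (intros t ht; now apply sqr_horizon_distance_le).
  pose proof (ex_RInt_weighted_sqr_derivative _ w phi dphi hphi hw) as hex.
  assert (hbound : forall r', rplus M a <= r' ->
    RInt (fun r => Cmod (phi r) ^ 2) (rplus M a) r'
    <= (2 + 4 * c) * (RInt (fun r => w r * Cmod (dphi r) ^ 2) (rplus M a) r'
                      + (r' - rplus M a) * Cmod (phi r') ^ 2)).
  { intros r' hr'.
    pose proof (hardy_C1_on_half _ c w phi dphi hphi hw hwc r' hr').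
    assert (0 <= c) by apply pow2_ge_0.
    assert (0 <= RInt (fun r => w r * Cmod (dphi r) ^ 2) (rplus M a) r').
    { apply RInt_ge_0; [exact hr' | apply hex; lra |].
      intros t _. unfold w. pose proof (pow2_ge_0 (Cmod (dphi t))). nra. }
    assert (0 <= (r' - rplus M a) * Cmod (phi r') ^ 2)
      by (apply Rmult_le_pos; [lra | apply pow2_ge_0]).
    nra. }
  split.
  - intros r' hr'. apply hbound. lra.
  - intros hlim.
    apply (Lim_le_of_bound (rplus M a) _ _ _ (fun r => (r - rplus M a) * Cmod (phi r) ^ 2)).
    + intros x hx. apply hbound. lra.
    + apply RInt_upper_nondecreasing; [| exact hex].
      intros t _. unfold w. pose proof (pow2_ge_0 (Cmod (dphi t))). nra.
    + apply is_lim_shift_mult; [lra | intros; apply pow2_ge_0 | exact hlim].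
Qed.
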